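(* Let $B$ be a crystal and $N\ge2$. For $i\in\{2,\dots,N-1\}$ the automorphism $T_i$ of $B^{\otimes N}$ by which the Bender–Knuth generator $\mathbf t_i$ of the cactus group $C_N$ acts satisfies $$T_i=\sigma_{1,1,i}\circ\sigma_{1,i,i+1}.$$ The same formula holds for $i=1$ if $\sigma_{1,1,1}$ is defined to be the identity, i.e. $T_1=\sigma_{1,1,2}$.
   Context: Let $\mathfrak g$ be a complex semisimple Lie algebra; a crystal is a normal $\mathfrak g$-crystal whose components are Kashiwara crystals $B_\lambda$ of irreducible $U_q(\mathfrak g)$-modules, with the tensor product $\tilde e_i(a\otimes b)=a\otimes\tilde e_ib$ if $\varepsilon_i(b)>\varphi_i(a)$, else $\tilde e_ia\otimes b$; $\tilde f_i(a\otimes b)=a\otimes\tilde f_ib$ if $\varepsilon_i(b)\ge\varphi_i(a)$, else $\tilde f_ia\otimes b$. For crystals $A,B$ the Henriques–Kamnitzer commutor is the crystal isomorphism $\sigma_{A,B}:A\otimes B\to B\otimes A$, $a\otimes b\mapsto\xi_{B\otimes A}(\xi_B(b)\otimes\xi_A(a))$, where $\xi$ is the Schützenberger involution (on each component $B_\lambda$ the unique map sending the highest weight element to the lowest one with $\xi\tilde f_i=\tilde e_{\theta(i)}\xi$, $\xi\tilde e_i=\tilde f_{\theta(i)}\xi$, $w_0\alpha_i=-\alpha_{\theta(i)}$). For $1\le p\le r<q\le N$, $\sigma_{p,r,q}=1_{B^{\otimes(p-1)}}\otimes\sigma_{B^{\otimes(r-p+1)},B^{\otimes(q-r)}}\otimes1_{B^{\otimes(N-q)}}$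 on $B^{\otimes N}$. Define $s_{p,p}=1$, $s_{p,p+1}=\sigma_{p,p,p+1}$, $s_{p,q}=\sigma_{p,p,q}\circ s_{p+1,q}$ ($q-p>1$). The cactus group $C_N$ has generators $\mathbf s_{p,q}$ ($1\le p<q\le N$) acting on $B^{\otimes N}$ by $s_{p,q}$ (Henriques–Kamnitzer); its Bender–Knuth generators (Chmutov–Glick–Pylyavskyy) are $\mathbf t_1=\mathbf s_{1,2}$, $\mathbf t_2=\mathbf s_{1,2}\mathbf s_{1,3}\mathbf s_{1,2}$, $\mathbf t_i=\mathbf s_{1,i}\mathbf s_{1,i+1}\mathbf s_{1,i}\mathbf s_{1,i-1}$ ($i>2$), so that $T_1=s_{1,2}$, $T_2=s_{1,2}\circ s_{1,3}\circ s_{1,2}$, $T_i=s_{1,i}\circ s_{1,i+1}\circ s_{1,i}\circ s_{1,i-1}$ for $i>2$. *)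

From Stdlib Require Import ClassicalEpsilon Relation_Operators.
From mathcomp Require Import all_boot.

Set Implicit Arguments.
Unset Strict Implicit.
Unset Printing Implicit Defensive.

(* Crystals (index set I of simple roots).  e_i, f_i are partial maps   *)
(* (None = 0), eps_i, phi_i the usual nat-valued functions.             *)
Record crystal (I : Type) := Crystal {
  carrier :> Type;
  ce : I -> carrier -> option carrier;
  cf : I -> carrier -> option carrier;
  ceps : I -> carrier -> nat;
  cphi : I -> carrier -> nat }.
Arguments ce {I} c i _.
Arguments cf {I} c i _.
Arguments ceps {I} c i _.
Arguments cphi {I} c i _.

Section CrystalDefs.
Variable I : Type.

Definition seminormal (C : crystal I) : Prop :=
  (forall i (x y : C), ce C i x = Some y <-> cf C i y = Some x) /\
  (forall i (x : C), ce C i x = None <-> ceps C i x = 0) /\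
  (forall i (x y : C), ce C i x = Some y -> ceps C i y = (ceps C i x).-1) /\
  (forall i (x : C), cf C i x = None <-> cphi C i x = 0) /\
  (forall i (x y : C), cf C i x = Some y -> cphi C i y = (cphi C i x).-1).

Definition conn (C : crystal I) : C -> C -> Prop :=
  clos_refl_sym_trans C (fun a b => exists i, ce C i a = Some b).

Definition highest (C : crystal I) (x : C) : Prop := forall i, ce C i x = None.

(* tensor product with the convention of the paper:
   e_i(a (x) b) = a (x) e_i b if eps_i(b) > phi_i(a), else e_i a (x) b;
   f_i(a (x) b) = a (x) f_i b if eps_i(b) >= phi_i(a), else f_i a (x) b. *)
Definition tensor (C D : crystal I) : crystal I :=
  @Crystal I (C * D)%type
    (fun i ab => if cphi C i ab.1 < ceps D i ab.2
                 then omap (fun b' => (ab.1, b')) (ce D i ab.2)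
                 else omap (fun a' => (a', ab.2)) (ce C i ab.1))
    (fun i ab => if cphi C i ab.1 <= ceps D i ab.2
                 then omap (fun b' => (ab.1, b')) (cf D i ab.2)
                 else omap (fun a' => (a', ab.2)) (cf C i ab.1))
    (fun i ab => ceps C i ab.1 + (ceps D i ab.2 - cphi C i ab.1))
    (fun i ab => cphi D i ab.2 + (cphi C i ab.1 - ceps D i ab.2)).

Definition component_iso (C D : crystal I) (g : C -> D) (d : D) : Prop :=
  injective g /\
  (forall i x, omap g (ce C i x) = ce D i (g x)) /\
  (forall i x, omap g (cf C i x) = cf D i (g x)) /\
  (forall i x, ceps D i (g x) = ceps C i x) /\
  (forall i x, cphi D i (g x) = cphi C i x) /\
  (forall y, conn d y <-> exists x, g x = y).

Definition normal_in (L : Type) (Bl : L -> crystal I) (C : crystal I) : Prop :=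
  forall c : C, exists lam (g : Bl lam -> C), component_iso g c.

Variable theta : I -> I.

(* g is a Schuetzenberger map on the component of c:
   xi f_i = e_theta(i) xi, xi e_i = f_theta(i) xi, and xi preserves the
   component (hence sends its highest weight element to its lowest one) *)
Definition schutz_at (C : crystal I) (c : C) (g : C -> C) : Prop :=
  forall x, conn c x ->
    (forall i, omap g (cf C i x) = ce C (theta i) (g x)) /\
    (forall i, omap g (ce C i x) = cf C (theta i) (g x)) /\
    conn x (g x).

(* the Schuetzenberger involution, defined componentwise as the (unique)
   such map *)
Definition xi (C : crystal I) (c : C) : C :=
  epsilon (inhabits (fun x : C => x)) (schutz_at c) c.

(* Axioms satisfied by the family {B_lambda} of Kashiwara crystals of the
   irreducible U_q(g)-modules. *)
Definition kashiwara_family (L : Type) (Bl : L -> crystal I) : Prop :=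
  (forall lam, seminormal (Bl lam)) /\
  (forall lam (x y : Bl lam), conn x y) /\
  (forall lam, exists h : Bl lam, highest h /\ forall x, highest x -> x = h) /\
  (forall lam, exists g, forall x : Bl lam, schutz_at x g) /\
  (forall lam mu, normal_in Bl (tensor (Bl lam) (Bl mu))).

(* Tensor powers B^{(x)k}, realised on words (seq B) of length k, with  *)
(* the bracketing B (x) (B (x) ( ... )).  The crystal on seq B is the    *)
(* direct sum of all tensor powers; its components lie in a fixed length *)
(* so xi on it restricts to xi on each B^{(x)k}.                         *)
Variable B : crystal I.

Fixpoint weps (i : I) (w : seq B) : nat :=
  if w is b :: w' then ceps B i b + (weps i w' - cphi B i b) else 0.
Fixpoint wphi (i : I) (w : seq B) : nat :=
  if w is b :: w' then wphi i w' + (cphi B i b - weps i w') else 0.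
Fixpoint we (i : I) (w : seq B) : option (seq B) :=
  if w is b :: w' then
    if cphi B i b < weps i w' then omap (cons b) (we i w')
    else omap (fun b' => b' :: w') (ce B i b)
  else None.
Fixpoint wf (i : I) (w : seq B) : option (seq B) :=
  if w is b :: w' then
    if cphi B i b <= weps i w' then omap (cons b) (wf i w')
    else omap (fun b' => b' :: w') (cf B i b)
  else None.

Definition words : crystal I := @Crystal I (seq B) we wf weps wphi.

(* Henriques--Kamnitzer commutor sigma_{A,B'} for A = B^{(x)m}, B' = B^{(x)n}:
   a (x) b |-> xi_{B' (x) A}(xi_{B'} b (x) xi_A a), read back as a word *)
Definition commutor (u v : seq B) : seq B :=
  let p : seq B * seq B :=
    @xi (tensor words words) (@xi words v, @xi words u) in p.1 ++ p.2.

(* sigma_{p,r,q} on B^{(x)N} (1-based positions) *)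
Definition sigma (p r q : nat) (w : seq B) : seq B :=
  take p.-1 w ++
  commutor (take (r - p.-1) (drop p.-1 w)) (take (q - r) (drop r w)) ++
  drop q w.

Fixpoint s_aux (d p : nat) (w : seq B) : seq B :=
  if d is d'.+1 then sigma p p (p + d) (s_aux d' p.+1 w) else w.
Definition s (p q : nat) : seq B -> seq B := s_aux (q - p) p.

Definition T (i : nat) : seq B -> seq B :=
  if i == 1 then s 1 2
  else if i == 2 then s 1 2 \o s 1 3 \o s 1 2
  else s 1 i \o s 1 i.+1 \o s 1 i \o s 1 i.-1.

End CrystalDefs.

Arguments xi {I} theta C c.
Arguments sigma {I} theta B p r q w.
Arguments s {I} theta B p q _.
Arguments T {I} theta B i _.
Arguments kashiwara_family {I} theta {L} Bl.
Arguments normal_in {I L} Bl C.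

From Stdlib Require Import ClassicalEpsilon Relation_Operators Operators_Properties.
From mathcomp Require Import all_boot zify.

Set Implicit Arguments.
Unset Strict Implicit.
Unset Printing Implicit Defensive.

(** Every component of [B^{(x)n}], [n >= 1], is isomorphic to some [B_lambda], where the
    Schuetzenberger involution is the unique map exchanging [e_i] and
    [f_theta(i)]; this uniqueness lets [xi] be transported along crystal
    isomorphisms.  With [xi_rev (b_1 ... b_n) = xi b_n ... xi b_1], the map
    [srev = xi o xi_rev] is a crystal automorphism and the commutor becomes
    [sigma (u, v) = srev (srev u ++ srev v)].  Hence [sigma_{p,r,q}] is a product
    of three segment reversals, [s_{1,q}] is [srev] on the first [q] letters, and the
    cactus relation [s_{1,q} s_{a+1,a+n} s_{1,q} = s_{q-a-n+1,q-a}] turns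
    [sigma_{1,1,i} sigma_{1,i,i+1} = s_{1,i} s_{2,i} s_{1,i+1} s_{1,i}] into
    [s_{1,i} s_{1,i+1} s_{1,i} s_{1,i-1} = T_i]. *)

Section CrystalGraph.
Variable I : Type.
Implicit Types C D : crystal I.

Lemma conn_refl C (x : C) : conn x x.
Proof. exact: rst_refl. Qed.

Lemma conn_sym C (x y : C) : conn x y -> conn y x.
Proof. exact: rst_sym. Qed.

Lemma conn_trans C (x y z : C) : conn x y -> conn y z -> conn x z.
Proof. exact: rst_trans. Qed.

Lemma conn_ce C i (x y : C) : ce C i x = Some y -> conn x y.
Proof. by move=> e; apply: rst_step; exists i. Qed.

Lemma conn_ind C (c : C) (Q : C -> Prop) :
  Q c ->
  (forall i x y, conn c x -> conn c y -> ce C i x = Some y -> Q x <-> Q y) ->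
  forall y, conn c y -> Q y.
Proof.
move=> Qc QE y /clos_rst_rstn1_iff; elim=> [|x z [[i e]|[i e]] /clos_rst_rstn1_iff cx Qx] //.
- by apply/(QE i x z cx _ e) => //; apply: conn_trans cx (conn_ce e).
- by apply/(QE i z x _ cx e) => //; apply: conn_trans cx (conn_sym (conn_ce e)).
Qed.

Lemma conn_map_on C D (h : C -> D) (c : C) :
  (forall i x y, conn c x -> ce C i x = Some y -> conn (h x) (h y)) ->
  forall y, conn c y -> conn (h c) (h y).
Proof.
move=> hE; apply: conn_ind => [|i x y cx _ e]; first exact: conn_refl.
have hxy := hE i x y cx e.
by split=> hx; [exact: conn_trans hx hxy | exact: conn_trans hx (conn_sym hxy)].
Qed.

Lemma eq_on_conn C D (c : C) (k1 k2 : C -> D) (E F : I -> D -> option D) :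
  (forall i x y, conn c y -> ce C i x = Some y -> cf C i y = Some x) ->
  (forall i x, conn c x -> omap k1 (ce C i x) = E i (k1 x) /\ omap k1 (cf C i x) = F i (k1 x)) ->
  (forall i x, conn c x -> omap k2 (ce C i x) = E i (k2 x) /\ omap k2 (cf C i x) = F i (k2 x)) ->
  k1 c = k2 c -> forall y, conn c y -> k1 y = k2 y.
Proof.
move=> cf_ce H1 H2 k12c; apply: (@conn_ind _ c (fun y => k1 y = k2 y)) => // i x y cx cy e.
have [e1 _] := H1 i x cx; have [e2 _] := H2 i x cx.
have [_ f1] := H1 i y cy; have [_ f2] := H2 i y cy.
rewrite e /= in e1 e2; rewrite (cf_ce i x y cy e) /= in f1 f2.
split=> k12.
- by move: e1; rewrite k12 -e2 => -[].
- by move: f1; rewrite k12 -f2 => -[].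
Qed.

Definition crystal_morphism C D (m : C -> D) : Prop :=
  [/\ forall i x, omap m (ce C i x) = ce D i (m x),
      forall i x, omap m (cf C i x) = cf D i (m x),
      forall i x, ceps D i (m x) = ceps C i x &
      forall i x, cphi D i (m x) = cphi C i x].

Lemma component_isoP C D (h : C -> D) (d : D) :
  component_iso h d <->
  [/\ injective h, crystal_morphism h & forall y, conn d y <-> exists x, h x = y].
Proof.
split=> [[? [? [? [? [? ?]]]]]|[? [? ? ? ?] ?]]; first by split.
by do 5 (split=> //).
Qed.

End CrystalGraph.

Section Transport.
Variables (I : Type) (theta : I -> I).

Lemma schutz_at_transport (C D : crystal I) (k : C -> D) (k' : D -> C) (c : C) (g : D -> D) :
  (forall x, conn c x -> k' (k x) = x) ->
  (forall i x, conn c x -> omap k (ce C i x) = ce D i (k x)) ->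
  (forall i x, conn c x -> omap k (cf C i x) = cf D i (k x)) ->
  (forall i y, conn (k c) y -> omap k' (ce D i y) = ce C i (k' y)) ->
  (forall i y, conn (k c) y -> omap k' (cf D i y) = cf C i (k' y)) ->
  schutz_at theta (k c) g -> schutz_at theta c (fun x => k' (g (k x))).
Proof.
move=> kK k_ce k_cf k'_ce k'_cf Sg x cx.
have ckx : conn (k c) (k x).
  apply: conn_map_on cx => i a b ca e.
  by apply: (@conn_ce _ _ i); rewrite -k_ce // e.
have [g_cf [g_ce g_conn]] := Sg _ ckx.
have ckgx := conn_trans ckx g_conn.
split; [|split] => [i|i|].
- by rewrite -k'_ce // -g_cf -k_cf //; case: (cf C i x).
- by rewrite -k'_cf // -g_ce -k_ce //; case: (ce C i x).
- rewrite -{1}(kK x cx); apply: conn_map_on g_conn => i a b ca e.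
  by apply: (@conn_ce _ _ i); rewrite -k'_ce ?e //; apply: conn_trans ckx ca.
Qed.

End Transport.

Section Component.
Variables (I : Type) (theta : I -> I) (L : Type) (Bl : L -> crystal I).
Hypothesis thetaK : forall i, theta (theta i) = i.
Hypothesis Bl_seminormal : forall lam, seminormal (Bl lam).
Hypothesis Bl_highest : forall lam, exists h : Bl lam, highest h /\ forall x, highest x -> x = h.
Hypothesis Bl_schutz : forall lam, exists g, forall x : Bl lam, schutz_at theta x g.

Variables (C : crystal I) (lam : L) (h : Bl lam -> C) (c : C).
Hypothesis c_iso : component_iso h c.

Let h_inj : injective h. Proof. by case/component_isoP: c_iso. Qed.
Let h_morph : crystal_morphism h. Proof. by case/component_isoP: c_iso. Qed.
Let h_ce i x : omap h (ce _ i x) = ce C i (h x). Proof. by case: h_morph. Qed.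
Let h_cf i x : omap h (cf _ i x) = cf C i (h x). Proof. by case: h_morph. Qed.
Let h_ceps i x : ceps C i (h x) = ceps _ i x. Proof. by case: h_morph. Qed.
Let h_cphi i x : cphi C i (h x) = cphi _ i x. Proof. by case: h_morph. Qed.

Lemma component_iso_conn x : conn c (h x).
Proof. by case/component_isoP: c_iso => _ _ ->; exists x. Qed.

Lemma component_iso_surj y : conn c y -> exists x, h x = y.
Proof. by case/component_isoP: c_iso => _ _ <-. Qed.

Lemma cf_ce_on i x y : conn c x -> ce C i x = Some y -> cf C i y = Some x.
Proof.
move=> /component_iso_surj [x0 <-]; rewrite -h_ce; case E: (ce _ i x0) => [y0|] //= [<-].
by have [S _] := Bl_seminormal lam; rewrite -h_cf (S i x0 y0).1.
Qed.

Lemma ce_cf_on i x y : conn c x -> cf C i x = Some y -> ce C i y = Some x.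
Proof.
move=> /component_iso_surj [x0 <-]; rewrite -h_cf; case E: (cf _ i x0) => [y0|] //= [<-].
by have [S _] := Bl_seminormal lam; rewrite -h_ce (S i y0 x0).2.
Qed.

Lemma ce_None_on i x : conn c x -> ce C i x = None <-> ceps C i x = 0.
Proof.
move=> /component_iso_surj [x0 <-]; rewrite -h_ce h_ceps.
by have [_ [S _]] := Bl_seminormal lam; rewrite -S; case: (ce _ i x0).
Qed.

Lemma cf_None_on i x : conn c x -> cf C i x = None <-> cphi C i x = 0.
Proof.
move=> /component_iso_surj [x0 <-]; rewrite -h_cf h_cphi.
by have [_ [_ [_ [S _]]]] := Bl_seminormal lam; rewrite -S; case: (cf _ i x0).
Qed.

Lemma ceps_ce_on i x y : conn c x -> ce C i x = Some y -> ceps C i y = (ceps C i x).-1.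
Proof.
move=> /component_iso_surj [x0 <-]; rewrite -h_ce h_ceps.
case E: (ce _ i x0) => [y0|] //= [<-]; rewrite h_ceps.
by have [_ [_ [S _]]] := Bl_seminormal lam; apply: S.
Qed.

Lemma cphi_cf_on i x y : conn c x -> cf C i x = Some y -> cphi C i y = (cphi C i x).-1.
Proof.
move=> /component_iso_surj [x0 <-]; rewrite -h_cf h_cphi.
case E: (cf _ i x0) => [y0|] //= [<-]; rewrite h_cphi.
by have [_ [_ [_ [_ S]]]] := Bl_seminormal lam; apply: S.
Qed.

Lemma schutz_exists_on : exists g, schutz_at theta c g.
Proof.
have [x0 _] := component_iso_surj (conn_refl c).
have [g Hg] := Bl_schutz lam.
pose h_inv (y : C) : Bl lam := epsilon (inhabits x0) (fun x => h x = y).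
have h_invK x : h_inv (h x) = x.
  by apply: h_inj; apply: (epsilon_spec (inhabits x0) (fun z => h z = h x)); exists x.
exists (fun y => h (g (h_inv y))) => y /component_iso_surj [x <-].
have [g_cf [g_ce g_conn]] := Hg x x (conn_refl _).
split; [|split] => [i|i|].
- by rewrite -h_cf h_invK -h_ce -g_cf; case: (cf _ i x) => //= z; rewrite h_invK.
- by rewrite -h_ce h_invK -h_cf -g_ce; case: (ce _ i x) => //= z; rewrite h_invK.
- rewrite h_invK; apply: (conn_map_on (h := h)) g_conn => i a b _ e.
  by apply: (@conn_ce _ _ i); rewrite -h_ce e.
Qed.

Lemma highest_on_unique x y : conn c x -> conn c y -> highest x -> highest y -> x = y.
Proof.
have [hl [_ hlU]] := Bl_highest lam.
suff hlP z : conn c z -> highest z -> z = h hl.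
  by move=> cx cy hx hy; rewrite (hlP x cx hx) (hlP y cy hy).
move=> /component_iso_surj [z0 <-] hz; congr h; apply: hlU => i.
by have := hz i; rewrite -h_ce; case: (ce _ i z0).
Qed.

Lemma highest_on_exists : exists H, conn c H /\ highest H.
Proof.
have [hl [hlH _]] := Bl_highest lam.
by exists (h hl); split; [apply: component_iso_conn | move=> i; rewrite -h_ce hlH].
Qed.

Section Schutzenberger.
Variable g : C -> C.
Hypothesis g_schutz : schutz_at theta c g.

Lemma schutz_conn_on x : conn c x -> conn c (g x).
Proof. by move=> cx; have [_ [_ cg]] := g_schutz cx; apply: conn_trans cx cg. Qed.

Lemma schutz_highest_on y : conn c y -> (forall i, cf C i y = None) -> highest (g y).
Proof. by move=> cy hy i; have [g_cf _] := g_schutz cy; rewrite -(thetaK i) -g_cf hy. Qed.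

Lemma schutz_lowest_on y : conn c y -> highest y -> forall i, cf C i (g y) = None.
Proof. by move=> cy hy i; have [_ [g_ce _]] := g_schutz cy; rewrite -(thetaK i) -g_ce hy. Qed.

Lemma schutz_invol_on x : conn c x -> g (g x) = x.
Proof.
have [H [cH hH]] := highest_on_exists.
move=> cx; apply: (@eq_on_conn _ _ _ H (fun y => g (g y)) id (ce C) (cf C)).
- move=> i a b cb e; apply: (cf_ce_on _ e).
  exact: conn_trans cH (conn_trans cb (conn_sym (conn_ce e))).
- move=> i y cy.
  have cy' : conn c y := conn_trans cH cy.
  have [g_cf [g_ce _]] := g_schutz cy'.
  have [gg_cf [gg_ce _]] := g_schutz (schutz_conn_on cy').
  by rewrite !(omap_comp g g) /= g_ce gg_cf g_cf gg_ce !thetaK.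
- by move=> i y _; rewrite !omap_id.
- apply: (highest_on_unique _ cH _ hH).
  - exact: schutz_conn_on (schutz_conn_on cH).
  - exact: (schutz_highest_on (schutz_conn_on cH) (schutz_lowest_on cH hH)).
- exact: conn_trans (conn_sym cH) cx.
Qed.
End Schutzenberger.

Lemma schutz_unique_on g1 g2 x :
  schutz_at theta c g1 -> schutz_at theta c g2 -> conn c x -> g1 x = g2 x.
Proof.
move=> S1 S2 cx; have [H [cH hH]] := highest_on_exists.
apply: (@eq_on_conn _ _ _ H g1 g2 (fun i => cf C (theta i)) (fun i => ce C (theta i))).
- move=> i a b cb e; apply: (cf_ce_on _ e).
  exact: conn_trans cH (conn_trans cb (conn_sym (conn_ce e))).
- by move=> i y cy; have [? [? _]] := S1 y (conn_trans cH cy).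
- by move=> i y cy; have [? [? _]] := S2 y (conn_trans cH cy).
- have c2H := schutz_conn_on S2 cH.
  have e : g1 (g2 H) = H.
    apply: (highest_on_unique (schutz_conn_on S1 c2H) cH _ hH).
    exact: (schutz_highest_on S1 c2H (schutz_lowest_on S2 cH hH)).
  by rewrite -{1}e (schutz_invol_on S1 c2H).
- exact: conn_trans (conn_sym cH) cx.
Qed.

End Component.

Section SchutzenbergerInvolution.
Variables (I : Type) (theta : I -> I) (L : Type) (Bl : L -> crystal I).
Hypothesis thetaK : forall i, theta (theta i) = i.
Hypothesis Bl_seminormal : forall lam, seminormal (Bl lam).
Hypothesis Bl_highest : forall lam, exists h : Bl lam, highest h /\ forall x, highest x -> x = h.
Hypothesis Bl_schutz : forall lam, exists g, forall x : Bl lam, schutz_at theta x g.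

Variables (C : crystal I) (P : C -> Prop).
Hypothesis P_iso : forall x, P x -> exists lam (h : Bl lam -> C), component_iso h x.
Hypothesis P_conn : forall x y, P x -> conn x y -> P y.

Local Notation xiC := (xi theta C).

Lemma xi_eq_schutz c g y : P c -> schutz_at theta c g -> conn c y -> xiC y = g y.
Proof.
move=> Pc Sg cy; have [lam [h iso]] := P_iso (P_conn Pc cy).
rewrite /xi; apply: (schutz_unique_on thetaK Bl_seminormal Bl_highest iso _ _ (conn_refl y)).
- by apply: epsilon_spec; apply: (schutz_exists_on Bl_schutz iso).
- by move=> z yz; apply: Sg; apply: conn_trans cy yz.
Qed.

Lemma xi_schutz c : P c -> schutz_at theta c xiC.
Proof.
move=> Pc; have [lam [h iso]] := P_iso Pc.
have [g Sg] := schutz_exists_on Bl_schutz iso.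
have xiE y : conn c y -> xiC y = g y by apply: xi_eq_schutz Pc Sg.
move=> y cy; have [g_cf [g_ce g_conn]] := Sg y cy.
rewrite xiE //; split; [|split] => // i.
- rewrite -g_cf; case E: (cf C i y) => [z|] //=; rewrite xiE //.
  exact: conn_trans cy (conn_sym (conn_ce (ce_cf_on Bl_seminormal iso cy E))).
- rewrite -g_ce; case E: (ce C i y) => [z|] //=; rewrite xiE //.
  exact: conn_trans cy (conn_ce E).
Qed.

Lemma conn_xi x : P x -> conn x (xiC x).
Proof. by move=> Px; have [_ [_ cx]] := xi_schutz Px (conn_refl x). Qed.

Lemma xiK x : P x -> xiC (xiC x) = x.
Proof.
move=> Px; have [lam [h iso]] := P_iso Px.
exact: (schutz_invol_on thetaK Bl_seminormal Bl_highest iso (xi_schutz Px) (conn_refl x)).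
Qed.

Lemma ceps_xi i x : P x -> ceps C i x = cphi C (theta i) (xiC x).
Proof.
move=> Px; have [lam [h iso]] := P_iso Px.
have Sxi := xi_schutz Px.
suff ceps_xi_on n y : conn x y -> ceps C i y = n -> n = cphi C (theta i) (xiC y).
  exact: ceps_xi_on (conn_refl x) erefl.
elim: n y => [|n IH] y xy yn; have [_ [xi_ce _]] := Sxi y xy.
- have /(ce_None_on Bl_seminormal iso _ xy) ce0 : ceps C i y = 0 by [].
  move: xi_ce => /(_ i); rewrite ce0 => /esym /(cf_None_on Bl_seminormal iso _) -> //.
  exact: (schutz_conn_on Sxi xy).
- case E: (ce C i y) => [z|]; last by move/(ce_None_on Bl_seminormal iso _ xy): E; rewrite yn.
  have xz := conn_trans xy (conn_ce E).
  have /IH -> // : ceps C i z = n by rewrite (ceps_ce_on Bl_seminormal iso xy E) yn.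
  move: xi_ce => /(_ i); rewrite E /= => /esym xi_cf.
  have xxy := schutz_conn_on Sxi xy.
  rewrite (cphi_cf_on Bl_seminormal iso xxy xi_cf).
  have : cphi C (theta i) (xiC y) <> 0 by move/(cf_None_on Bl_seminormal iso _ xxy); rewrite xi_cf.
  by case: (cphi C (theta i) (xiC y)).
Qed.

Lemma cphi_xi i x : P x -> cphi C i x = ceps C (theta i) (xiC x).
Proof.
move=> Px; have Pxx : P (xiC x) by apply: P_conn Px (conn_xi Px).
by rewrite (ceps_xi _ Pxx) xiK // thetaK.
Qed.

End SchutzenbergerInvolution.

Section WordCrystal.
Variables (I : Type) (B : crystal I).
Implicit Types (u v w : seq B).

Lemma size_we i u v : we i u = Some v -> size v = size u.
Proof.
elim: u v => [|b u IH] v //=; case: ifP => _.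
- by case E: (we i u) => [u'|] //= [<-] /=; rewrite (IH _ E).
- by case: (ce B i b) => [b'|] //= [<-].
Qed.

Lemma size_wf i u v : wf i u = Some v -> size v = size u.
Proof.
elim: u v => [|b u IH] v //=; case: ifP => _.
- by case E: (wf i u) => [u'|] //= [<-] /=; rewrite (IH _ E).
- by case: (cf B i b) => [b'|] //= [<-].
Qed.

Lemma conn_size (x y : words B) : conn x y -> size y = size x.
Proof.
elim=> {x y} [x y [i e]|x|x y _ IH|x y z _ IH1 _ IH2] //.
- exact: size_we e.
- by rewrite IH2 IH1.
Qed.

Lemma weps_cat i u v : weps i (u ++ v) = weps i u + (weps i v - wphi i u).
Proof. by elim: u => [|b u IH] /=; [lia | rewrite IH; lia]. Qed.

Lemma wphi_cat i u v : wphi i (u ++ v) = wphi i v + (wphi i u - weps i v).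
Proof. by elim: u => [|b u IH] /=; [lia | rewrite IH weps_cat; lia]. Qed.

Lemma wf_cat i u v : wf i (u ++ v) =
  if wphi i u <= weps i v then omap (cat u) (wf i v)
  else omap (cat^~ v) (wf i u).
Proof.
elim: u => [|b u IH] /=; first by case: (wf i v).
rewrite IH weps_cat.
set pb := cphi B i b; set eu := weps i u; set pu := wphi i u; set ev := weps i v.
have [D|D] := leqP (pu + (pb - eu)) ev.
- rewrite ifT; last by lia.
  by rewrite ifT; [case: (wf i v) | lia].
- have [E|E] := leqP pb eu.
  + by rewrite ifT ?ifF; [case: (wf i u) | apply/negbTE; lia | lia].
  + by rewrite ifF; [case: (cf B i b) | apply/negbTE; lia].
Qed.

Hypothesis B_ce_None : forall i b, ce B i b = None <-> ceps B i b = 0.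

Lemma we_None i v : weps i v = 0 -> we i v = None.
Proof.
case: v => [|b v] //= /eqP; rewrite addn_eq0 subn_eq0 => /andP [/eqP eps0 phi_ge].
by rewrite ifF; [move/B_ce_None: eps0 => -> | apply/negbTE; rewrite -leqNgt].
Qed.

Lemma we_cat i u v : we i (u ++ v) =
  if wphi i u < weps i v then omap (cat u) (we i v)
  else omap (cat^~ v) (we i u).
Proof.
elim: u => [|b u IH] /=.
  by case: ifP => [|/negbT]; [case: (we i v) | rewrite -leqNgt leqn0 => /eqP/we_None ->].
rewrite IH weps_cat.
set pb := cphi B i b; set eu := weps i u; set pu := wphi i u; set ev := weps i v.
have [D|D] := ltnP (pu + (pb - eu)) ev.
- rewrite ifT; last by lia.
  by rewrite ifT; [case: (we i v) | lia].
- have [E|E] := ltnP pb eu.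
  + by rewrite ifT ?ifF; [case: (we i u) | apply/negbTE; lia | lia].
  + by rewrite ifF; [case: (ce B i b) | apply/negbTE; lia].
Qed.

End WordCrystal.

Lemma component_iso_comp (I : Type) (C D E : crystal I) (h : C -> D) (d : D) (m : D -> E) :
  component_iso h d -> injective m -> crystal_morphism m ->
  (forall i z y, ce E i z = Some (m y) -> exists y', m y' = z) ->
  component_iso (fun x => m (h x)) (m d).
Proof.
case/component_isoP=> h_inj [h_ce h_cf h_ceps h_cphi] h_img.
move=> m_inj [m_ce m_cf m_ceps m_cphi] m_closed.
apply/component_isoP; split.
- by move=> x y /m_inj /h_inj.
- split=> i x; rewrite ?m_ceps ?m_cphi ?h_ceps ?h_cphi //.
  + by rewrite -m_ce -h_ce; case: (ce _ i x).
  + by rewrite -m_cf -h_cf; case: (cf _ i x).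
- move=> y; split => [|[x <-]].
  + move: y; apply: (@conn_ind _ _ (m d) (fun y => exists x, m (h x) = y)).
      by have [x <-] := (h_img d).1 (conn_refl d); exists x.
    move=> i z y _ _ e; split=> [[x ex]|[x ex]].
    * move: e; rewrite -ex -m_ce -h_ce.
      by case: (ce _ i x) => [x'|] //= [<-]; exists x'.
    * have e' : ce E i z = Some (m (h x)) by rewrite e ex.
      have [z' ez'] := m_closed _ _ _ e'.
      move: e'; rewrite -ez' -m_ce; case E': (ce D i z') => [hx|] //= [/m_inj ehx].
      rewrite ehx in E'.
      have /h_img [x' <-] : conn d z'.
        have /h_img cd : exists x0, h x0 = h x by exists x.
        exact: conn_trans cd (conn_sym (conn_ce E')).
      by exists x'.
  + apply: conn_map_on => [i a b _ e|]; last by apply/h_img; exists x.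
    by apply: (@conn_ce _ _ i); rewrite -m_ce e.
Qed.

Section WordComponents.
Variables (I : Type) (L : Type) (Bl : L -> crystal I).
Hypothesis Bl_seminormal : forall lam, seminormal (Bl lam).
Hypothesis Bl_tensor : forall lam mu, normal_in Bl (tensor (Bl lam) (Bl mu)).
Variable B : crystal I.
Hypothesis B_normal : normal_in Bl B.

Local Notation W := (words B).

Lemma normal_ce_None i (b : B) : ce B i b = None <-> ceps B i b = 0.
Proof.
by have [lam [h iso]] := B_normal b; apply: (ce_None_on Bl_seminormal iso _ (conn_refl b)).
Qed.

Lemma normal_cf_None i (b : B) : cf B i b = None <-> cphi B i b = 0.
Proof.
by have [lam [h iso]] := B_normal b; apply: (cf_None_on Bl_seminormal iso _ (conn_refl b)).
Qed.

Lemma wf_letter i (b : B) : wf i [:: b] = omap (fun b' => [:: b']) (cf B i b).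
Proof. by rewrite /= leqn0; case: eqP => //= /normal_cf_None ->. Qed.

Lemma letter_morphism : crystal_morphism (fun b : B => [:: b] : W).
Proof.
split=> i b //=; [exact/esym/wf_letter | lia | lia].
Qed.

Lemma cons_morphism (C1 C2 : crystal I) (h1 : C1 -> B) (h2 : C2 -> W) :
  crystal_morphism h1 -> crystal_morphism h2 ->
  crystal_morphism (fun p : tensor C1 C2 => h1 p.1 :: h2 p.2 : W).
Proof.
case=> [h1_ce h1_cf h1_ceps h1_cphi] [h2_ce h2_cf h2_ceps h2_cphi].
have h2_we i x : omap h2 (ce C2 i x) = we i (h2 x) := h2_ce i x.
have h2_wf i x : omap h2 (cf C2 i x) = wf i (h2 x) := h2_cf i x.
have h2_weps i x : weps i (h2 x) = ceps C2 i x := h2_ceps i x.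
have h2_wphi i x : wphi i (h2 x) = cphi C2 i x := h2_cphi i x.
split=> i [x1 x2] /=; rewrite ?h1_ceps h1_cphi h2_weps ?h2_wphi //.
- by rewrite -h1_ce -h2_we; case: ifP; [case: (ce _ i x2) | case: (ce _ i x1)].
- by rewrite -h1_cf -h2_wf; case: ifP; [case: (cf _ i x2) | case: (cf _ i x1)].
Qed.

Lemma cons_image_closed (C1 C2 : crystal I) (h1 : C1 -> B) (h2 : C2 -> W) (b : B) (w : W) :
  component_iso h1 b -> component_iso h2 w ->
  forall i z p, ce W i z = Some (h1 p.1 :: h2 p.2) -> exists p', h1 p'.1 :: h2 p'.2 = z.
Proof.
case/component_isoP=> _ _ img1 /component_isoP [_ _ img2] i [|b' z] [x1 x2] //=.
case: ifP => _.
- case E: (we i z) => [z'|] //= [e1 e2]; subst b' z'.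
  have /img2 [x2' <-] : conn w z.
    have /img2 wx2 : exists x, h2 x = h2 x2 by exists x2.
    exact: conn_trans wx2 (conn_sym (@conn_ce _ W i _ _ E)).
  by exists (x1, x2').
- case E: (ce B i b') => [b''|] //= [e1 e2]; subst b'' z.
  have /img1 [x1' <-] : conn b b'.
    have /img1 bx1 : exists x, h1 x = h1 x1 by exists x1.
    exact: conn_trans bx1 (conn_sym (conn_ce E)).
  by exists (x1', x2).
Qed.

Lemma words_component_iso (w : W) : w <> [::] -> exists lam (h : Bl lam -> W), component_iso h w.
Proof.
elim: w => [|b w IH] // _; have [lam1 [h1 iso1]] := B_normal b.
case: w IH => [|b2 w] IH.
  exists lam1, (fun x => [:: h1 x]).
  apply: (component_iso_comp (m := fun b : B => [:: b] : W) iso1) => [x y [] //||].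
    exact: letter_morphism.
  move=> i z y e; have := size_we e; case: z {e} => [|z0 [|]] //= _; by exists z0.
have [lam2 [h2 iso2]] := IH ltac:(done).
have [x1 ex1] := component_iso_surj iso1 (conn_refl b).
have [x2 ex2] := component_iso_surj iso2 (conn_refl (b2 :: w : W)).
have [lam3 [h3 iso3]] := Bl_tensor (x1, x2).
exists lam3, (fun p => h1 (h3 p).1 :: h2 (h3 p).2); rewrite -ex1 -ex2.
case/component_isoP: (iso1) => inj1 morph1 _; case/component_isoP: (iso2) => inj2 morph2 _.
apply: (component_iso_comp (m := fun p : tensor _ _ => h1 p.1 :: h2 p.2 : W) iso3).
- by move=> [p1 p2] [q1 q2] [/inj1 -> /inj2 ->].
- exact: cons_morphism.
- exact: cons_image_closed iso1 iso2.
Qed.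

End WordComponents.

Section Reversal.
Variables (I : Type) (theta : I -> I) (L : Type) (Bl : L -> crystal I).
Hypothesis thetaK : forall i, theta (theta i) = i.
Hypothesis Bl_seminormal : forall lam, seminormal (Bl lam).
Hypothesis Bl_highest : forall lam, exists h : Bl lam, highest h /\ forall x, highest x -> x = h.
Hypothesis Bl_schutz : forall lam, exists g, forall x : Bl lam, schutz_at theta x g.
Hypothesis Bl_tensor : forall lam mu, normal_in Bl (tensor (Bl lam) (Bl mu)).
Variable B : crystal I.
Hypothesis B_normal : normal_in Bl B.

Local Notation W := (words B).
Local Notation xiW := (xi theta W).
Local Notation xiB := (xi theta B).
Implicit Types (u v w z : seq B).

Let words_iso := words_component_iso Bl_seminormal Bl_tensor B_normal.

Let nonempty_conn (x y : W) : x <> [::] -> conn x y -> y <> [::].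
Proof. by move=> + /conn_size; case: x; case: y. Qed.

Let B_iso (b : B) (_ : True) := B_normal b.

Lemma conn_nil (y : W) : conn ([::] : W) y -> y = [::].
Proof. by move/conn_size; case: y. Qed.

(* The empty word is a one-point component, not covered by [words_component_iso]. *)
Lemma xi_words_nil : xiW [::] = [::].
Proof.
apply: conn_nil; rewrite /xi.
have Sid : exists g, schutz_at theta ([::] : W) g.
  by exists id => y /conn_nil ->; split; [|split] => //; apply: conn_refl.
by have [_ [_ c0]] := epsilon_spec (inhabits id) _ Sid ([::] : W) (conn_refl _).
Qed.

Lemma xi_words_schutz (c : W) : schutz_at theta c xiW.
Proof.
case: c => [|b w].
  by move=> y /conn_nil ->; rewrite xi_words_nil; split; [|split] => //; exact: conn_refl.
exact: (xi_schutz thetaK Bl_seminormal Bl_highest Bl_schutz words_iso nonempty_conn).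
Qed.

Lemma xi_words_eq_schutz (c : W) g y : schutz_at theta c g -> conn c y -> xiW y = g y.
Proof.
case: c => [|b w].
  move=> Sg /conn_nil ->; rewrite xi_words_nil.
  by have [_ [_ /conn_nil ->]] := Sg [::] (conn_refl _).
exact: (xi_eq_schutz thetaK Bl_seminormal Bl_highest Bl_schutz words_iso nonempty_conn).
Qed.

Lemma xi_wordsK w : xiW (xiW w) = w.
Proof.
case: w => [|b w]; first by rewrite !xi_words_nil.
exact: (xiK thetaK Bl_seminormal Bl_highest Bl_schutz words_iso nonempty_conn).
Qed.

Lemma size_xi_words w : size (xiW w) = size w.
Proof. by have [_ [_ /conn_size]] := xi_words_schutz (conn_refl (w : W)). Qed.

Lemma we_xi_words i w : we i (xiW w) = omap xiW (wf (theta i) w).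
Proof.
have [x_cf _] := xi_words_schutz (conn_refl (w : W)).
by rewrite [RHS]x_cf thetaK.
Qed.

Lemma wf_xi_words i w : wf i (xiW w) = omap xiW (we (theta i) w).
Proof.
have [_ [x_ce _]] := xi_words_schutz (conn_refl (w : W)).
by rewrite [RHS]x_ce thetaK.
Qed.

Lemma wphi_xi_words i w : wphi i w = weps (theta i) (xiW w).
Proof.
case: w => [|b w]; first by rewrite xi_words_nil.
have bw : (b :: w : W) <> [::] by [].
exact: (cphi_xi thetaK Bl_seminormal Bl_highest Bl_schutz words_iso nonempty_conn i bw).
Qed.

Lemma words_ce_cf i (x y : W) : wf i x = Some y -> we i y = Some x.
Proof.
case: x => [|b x] // e; have bx : (b :: x : W) <> [::] by [].
have [lam [h iso]] := words_iso bx.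
exact: (ce_cf_on Bl_seminormal iso (conn_refl _) e).
Qed.

Lemma xiB_schutz (b : B) : schutz_at theta b xiB.
Proof. exact: (xi_schutz thetaK Bl_seminormal Bl_highest Bl_schutz B_iso). Qed.

Lemma xiBK (b : B) : xiB (xiB b) = b.
Proof. exact: (xiK thetaK Bl_seminormal Bl_highest Bl_schutz B_iso). Qed.

Lemma cphi_xiB i (b : B) : cphi B i b = ceps B (theta i) (xiB b).
Proof. exact: (cphi_xi thetaK Bl_seminormal Bl_highest Bl_schutz B_iso). Qed.

Lemma ceps_xiB i (b : B) : ceps B i b = cphi B (theta i) (xiB b).
Proof. exact: (ceps_xi thetaK Bl_seminormal Bl_highest Bl_schutz B_iso). Qed.

Lemma we_letter_xi i (b : B) : we (theta i) [:: xiB b] = omap (fun b' => [:: xiB b']) (cf B i b).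
Proof. by have [xi_cf _] := xiB_schutz (conn_refl b); rewrite /= -xi_cf; case: (cf B i b). Qed.

Lemma wf_letter_xi i (b : B) : wf (theta i) [:: xiB b] = omap (fun b' => [:: xiB b']) (ce B i b).
Proof.
have [_ [xi_ce _]] := xiB_schutz (conn_refl b).
by rewrite (wf_letter Bl_seminormal B_normal) -xi_ce; case: (ce B i b).
Qed.

Lemma weps_letter_xi i (b : B) : weps (theta i) [:: xiB b] = cphi B i b.
Proof. by rewrite /= [RHS]cphi_xiB; lia. Qed.

Lemma wphi_letter_xi i (b : B) : wphi (theta i) [:: xiB b] = ceps B i b.
Proof. by rewrite /= [RHS]ceps_xiB; lia. Qed.

Lemma xi_words_letter (b : B) : xiW [:: b] = [:: xiB b].
Proof.
apply: (xi_words_eq_schutz (c := [:: b]) (g := map xiB)) (conn_refl _) => y /conn_size.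
case: y => [|b' []] // _; have [xi_cf [xi_ce xi_conn]] := xiB_schutz (conn_refl b').
have [l_ce l_cf _ _] := letter_morphism Bl_seminormal B_normal.
rewrite -[map _ _]/[:: xiB b']; split; [|split] => [i|i|].
- by rewrite -l_cf -l_ce -xi_cf; case: (cf B i b').
- by rewrite -l_ce -l_cf -xi_ce; case: (ce B i b').
- apply: (conn_map_on (h := fun x : B => [:: x] : W)) xi_conn => i x y _ e.
  by apply: (@conn_ce _ W i); rewrite -l_ce e.
Qed.

Definition xi_rev w : seq B := rev (map xiB w).

Lemma size_xi_rev w : size (xi_rev w) = size w.
Proof. by rewrite size_rev size_map. Qed.

Lemma xi_rev_cat u v : xi_rev (u ++ v) = xi_rev v ++ xi_rev u.
Proof. by rewrite /xi_rev map_cat rev_cat. Qed.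

Lemma xi_rev_cons (b : B) w : xi_rev (b :: w) = xi_rev w ++ [:: xiB b].
Proof. by rewrite /xi_rev /= rev_cons cats1. Qed.

Lemma xi_revK w : xi_rev (xi_rev w) = w.
Proof. by rewrite /xi_rev map_rev revK -map_comp (eq_map xiBK) map_id. Qed.

Lemma wphi_xi_rev i w : wphi (theta i) (xi_rev w) = weps i w.
Proof.
elim: w => //= b w IH.
by rewrite xi_rev_cons wphi_cat IH wphi_letter_xi weps_letter_xi.
Qed.

Lemma weps_xi_rev i w : weps (theta i) (xi_rev w) = wphi i w.
Proof.
elim: w => //= b w IH.
by rewrite xi_rev_cons weps_cat IH wphi_xi_rev weps_letter_xi.
Qed.

Lemma we_xi_rev i w : we (theta i) (xi_rev w) = omap xi_rev (wf i w).
Proof.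
elim: w => //= b w IH.
rewrite xi_rev_cons (we_cat (normal_ce_None Bl_seminormal B_normal)) wphi_xi_rev weps_letter_xi.
case: (leqP (cphi B i b) (weps i w)) => _.
  by rewrite IH; case: (wf i w) => //= w'; rewrite xi_rev_cons.
by rewrite we_letter_xi; case: (cf B i b) => //= b'; rewrite xi_rev_cons.
Qed.

Lemma wf_xi_rev i w : wf (theta i) (xi_rev w) = omap xi_rev (we i w).
Proof.
elim: w => //= b w IH.
rewrite xi_rev_cons wf_cat wphi_xi_rev weps_letter_xi.
case: (ltnP (cphi B i b) (weps i w)) => _.
  by rewrite IH; case: (we i w) => //= w'; rewrite xi_rev_cons.
by rewrite wf_letter_xi; case: (ce B i b) => //= b'; rewrite xi_rev_cons.
Qed.

Lemma conn_xi_rev (x y : W) : conn x y -> conn (xi_rev x : W) (xi_rev y).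
Proof.
apply: conn_map_on => i a b _ e; apply/conn_sym/(@conn_ce _ W (theta i)).
by apply: words_ce_cf; rewrite wf_xi_rev; have -> : we i a = Some b := e.
Qed.

Lemma xi_words_xi_rev w : xiW (xi_rev w) = xi_rev (xiW w).
Proof.
pose g z := xi_rev (xiW (xi_rev z)).
suff Sg : schutz_at theta (xi_rev w : W) g.
  by rewrite (xi_words_eq_schutz Sg (conn_refl _)) /g xi_revK.
move=> z _; have [_ [_ x_conn]] := xi_words_schutz (conn_refl (xi_rev z : W)).
split; [|split] => [i|i|] /=.
- by rewrite we_xi_rev wf_xi_words we_xi_rev; case: (wf i z).
- by rewrite wf_xi_rev we_xi_words wf_xi_rev; case: (we i z).
- by have := conn_xi_rev x_conn; rewrite xi_revK.
Qed.

Lemma xi_rev_xi_words w : xi_rev (xiW w) = xiW (xi_rev w).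
Proof. by rewrite -{1}(xi_revK w) xi_words_xi_rev xi_revK. Qed.

Definition srev w : seq B := xiW (xi_rev w).

Lemma size_srev w : size (srev w) = size w.
Proof. by rewrite size_xi_words size_xi_rev. Qed.

Lemma xi_rev_srev w : xi_rev (srev w) = xiW w.
Proof. by rewrite xi_rev_xi_words xi_revK. Qed.

Lemma srev_xi_words w : srev (xiW w) = xi_rev w.
Proof. by rewrite /srev xi_rev_xi_words xi_wordsK. Qed.

Lemma srevK w : srev (srev w) = w.
Proof. by rewrite /srev xi_rev_srev xi_wordsK. Qed.

Lemma srev_letter (b : B) : srev [:: b] = [:: b].
Proof. by rewrite /srev /xi_rev /= xi_words_letter xiBK. Qed.

Lemma we_srev i w : we i (srev w) = omap srev (we i w).
Proof. by rewrite we_xi_words wf_xi_rev; case: (we i w). Qed.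

Lemma wf_srev i w : wf i (srev w) = omap srev (wf i w).
Proof. by rewrite wf_xi_words we_xi_rev; case: (wf i w). Qed.

Lemma weps_srev i w : weps i (srev w) = weps i w.
Proof. by rewrite -{1}(thetaK i) -wphi_xi_words wphi_xi_rev. Qed.

Lemma wphi_srev i w : wphi i (srev w) = wphi i w.
Proof. by rewrite /srev wphi_xi_words xi_wordsK weps_xi_rev. Qed.

Local Notation WW := (tensor W W).

Definition cat_pair (p : WW) : W := p.1 ++ p.2.
Definition split_at n (w : W) : WW := (take n w, drop n w).

Lemma cat_pair_ce i (p : WW) : omap cat_pair (ce WW i p) = we i (cat_pair p).
Proof.
case: p => a b; rewrite /cat_pair /= (we_cat (normal_ce_None Bl_seminormal B_normal)).
by case: ifP; [case: (we i b) | case: (we i a)].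
Qed.

Lemma cat_pair_cf i (p : WW) : omap cat_pair (cf WW i p) = wf i (cat_pair p).
Proof.
by case: p => a b; rewrite /cat_pair /= wf_cat; case: ifP; [case: (wf i b) | case: (wf i a)].
Qed.

Lemma split_at_cat (p : WW) : split_at (size p.1) (cat_pair p) = p.
Proof. by case: p => a b; rewrite /split_at /cat_pair take_size_cat // drop_size_cat. Qed.

Lemma tensor_ce_size i (p q : WW) : ce WW i p = Some q -> size q.1 = size p.1.
Proof.
case: p => a b /=; case: ifP => _; first by case: (we i b) => //= b' [<-].
by case E: (we i a) => [a'|] //= [<-]; rewrite (size_we E).
Qed.

Lemma tensor_cf_size i (p q : WW) : cf WW i p = Some q -> size q.1 = size p.1.
Proof.
case: p => a b /=; case: ifP => _; first by case: (wf i b) => //= b' [<-].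
by case E: (wf i a) => [a'|] //= [<-]; rewrite (size_wf E).
Qed.

Lemma conn_tensor_size (p q : WW) : conn p q -> size q.1 = size p.1.
Proof.
elim=> {p q} [p q [i e]|p|p q _ IH|p q r _ IH1 _ IH2] //.
- exact: tensor_ce_size e.
- by rewrite IH2 IH1.
Qed.

Lemma split_at_ce i n (w : W) : n <= size w ->
  ce WW i (split_at n w) = omap (split_at n) (we i w).
Proof.
move=> nw; rewrite -[in RHS](cat_take_drop n w).
rewrite -[take n w ++ _]/(cat_pair (split_at n w)) -cat_pair_ce.
case E: (ce WW i _) => [q|] //=.
by rewrite -{1}(size_takel nw) -(tensor_ce_size E) split_at_cat.
Qed.

Lemma split_at_cf i n (w : W) : n <= size w ->
  cf WW i (split_at n w) = omap (split_at n) (wf i w).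
Proof.
move=> nw; rewrite -[in RHS](cat_take_drop n w).
rewrite -[take n w ++ _]/(cat_pair (split_at n w)) -cat_pair_cf.
case E: (cf WW i _) => [q|] //=.
by rewrite -{1}(size_takel nw) -(tensor_cf_size E) split_at_cat.
Qed.

Lemma commutorE u v : commutor theta u v = xiW (xiW v ++ xiW u).
Proof.
set a := xiW v; set b := xiW u; pose p0 : WW := (a, b).
have p0E : split_at (size a) (a ++ b) = p0 by exact: (split_at_cat p0).
(* [xi] on [WW] is the choice [G]; transporting [xiW] along [split_at] shows
   that a Schuetzenberger map exists on the component of [p0], so [G] is one. *)
pose G := epsilon (inhabits id) (schutz_at theta p0).
have SG : schutz_at theta p0 G.
  apply: epsilon_spec; exists (fun p => split_at (size a) (xiW (cat_pair p))).
  apply: (schutz_at_transport (k' := split_at (size a)) _ _ _ _ _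
            (@xi_words_schutz (cat_pair p0))) => [p|i p _|i p _|i y|i y].
  - by move/conn_tensor_size => /= <-; rewrite split_at_cat.
  - exact: cat_pair_ce.
  - exact: cat_pair_cf.
  - by move/conn_size=> yE; rewrite split_at_ce // yE size_cat leq_addr.
  - by move/conn_size=> yE; rewrite split_at_cf // yE size_cat leq_addr.
rewrite -p0E in SG.
have SG' := schutz_at_transport (k' := cat_pair) _ _ _ _ _ SG.
rewrite (xi_words_eq_schutz (SG' _ _ _ _ _) (conn_refl _)) ?p0E //.
- by move=> w _; rewrite /cat_pair cat_take_drop.
- by move=> i w /conn_size wE; rewrite split_at_ce // wE size_cat leq_addr.
- by move=> i w /conn_size wE; rewrite split_at_cf // wE size_cat leq_addr.
- by move=> i p _; rewrite cat_pair_ce.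
- by move=> i p _; rewrite cat_pair_cf.
Qed.

Lemma commutor_srev u v : commutor theta u v = srev (srev u ++ srev v).
Proof. by rewrite commutorE /srev xi_rev_cat !xi_rev_srev. Qed.

(* [srev_seg a n] is the action of [s_{a+1,a+n}]. *)
Definition srev_seg a n z : seq B := take a z ++ srev (take n (drop a z)) ++ drop (a + n) z.

Lemma srev_seg_cat a n u v t : size u = a -> size v = n ->
  srev_seg a n (u ++ v ++ t) = u ++ srev v ++ t.
Proof.
move=> <- <-; rewrite /srev_seg take_size_cat // drop_size_cat // take_size_cat //.
by rewrite [u ++ v ++ t]catA drop_size_cat ?size_cat.
Qed.

Lemma split3 a n z : a + n <= size z ->
  exists u v t, [/\ z = u ++ v ++ t, size u = a & size v = n].
Proof.
move=> h; exists (take a z), (take n (drop a z)), (drop (a + n) z).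
rewrite addnC -drop_drop !cat_take_drop; split=> //; apply: size_takel; rewrite ?size_drop; lia.
Qed.

Lemma size_srev_seg a n z : a + n <= size z -> size (srev_seg a n z) = size z.
Proof. by case/split3=> u [v [t [-> su sv]]]; rewrite srev_seg_cat // !size_cat size_srev. Qed.

Lemma srev_segK a n z : a + n <= size z -> srev_seg a n (srev_seg a n z) = z.
Proof.
case/split3=> u [v [t [-> su sv]]].
by rewrite !srev_seg_cat ?size_srev // srevK.
Qed.

Lemma srev_seg1 a z : a < size z -> srev_seg a 1 z = z.
Proof.
move=> h; have [u [v [t [-> su sv]]]] := @split3 a 1 z ltac:(lia).
by case: v sv => [|b []] // _; rewrite srev_seg_cat // srev_letter.
Qed.

Lemma srev_seg_catr a n z t : a + n <= size z -> srev_seg a n (z ++ t) = srev_seg a n z ++ t.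
Proof.
case/split3=> u [v [t' [-> su sv]]].
have -> : (u ++ v ++ t') ++ t = u ++ v ++ t' ++ t by rewrite -!catA.
by rewrite !srev_seg_cat // -!catA.
Qed.

Lemma we_srev_seg i a n z : a + n <= size z -> we i (srev_seg a n z) = omap (srev_seg a n) (we i z).
Proof.
case/split3=> u [v [t [-> su sv]]].
have ce_None := normal_ce_None Bl_seminormal B_normal.
rewrite srev_seg_cat // !(we_cat ce_None) !weps_cat weps_srev wphi_srev we_srev.
case: ifP => _; [case: ifP => _|].
- by case: (we i t) => //= t'; rewrite srev_seg_cat.
- by case E: (we i v) => [v'|] //=; rewrite srev_seg_cat // (size_we E).
- by case E: (we i u) => [u'|] //=; rewrite srev_seg_cat // (size_we E).
Qed.

Lemma wf_srev_seg i a n z : a + n <= size z -> wf i (srev_seg a n z) = omap (srev_seg a n) (wf i z).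
Proof.
case/split3=> u [v [t [-> su sv]]].
rewrite srev_seg_cat // !wf_cat !weps_cat weps_srev wphi_srev wf_srev.
case: ifP => _; [case: ifP => _|].
- by case: (wf i t) => //= t'; rewrite srev_seg_cat.
- by case E: (wf i v) => [v'|] //=; rewrite srev_seg_cat // (size_wf E).
- by case E: (wf i u) => [u'|] //=; rewrite srev_seg_cat // (size_wf E).
Qed.

Lemma xi_words_srev_seg a n (c : W) : a + n <= size c ->
  xiW (srev_seg a n c) = srev_seg a n (xiW c).
Proof.
move=> size_c.
have size_conn (x : W) : conn c x \/ conn (srev_seg a n c : W) x -> a + n <= size x.
  by case=> /conn_size ->; rewrite ?size_srev_seg.
have S : schutz_at theta c (fun x => srev_seg a n (xiW (srev_seg a n x))).
  apply: (schutz_at_transport _ _ _ _ _ (@xi_words_schutz (srev_seg a n c : W)))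
    => [x cx|i x cx|i x cx|i x cx|i x cx].
  - by rewrite srev_segK //; apply: size_conn; left.
  - by rewrite /= we_srev_seg //; apply: size_conn; left.
  - by rewrite /= wf_srev_seg //; apply: size_conn; left.
  - by rewrite /= we_srev_seg //; apply: size_conn; right.
  - by rewrite /= wf_srev_seg //; apply: size_conn; right.
rewrite (xi_words_eq_schutz S (conn_refl _)) srev_segK //.
by rewrite size_xi_words size_srev_seg.
Qed.

Lemma srev_seg_conj a n q w : a + n <= q -> q <= size w ->
  srev_seg 0 q (srev_seg a n (srev_seg 0 q w)) = srev_seg (q - a - n) n w.
Proof.
move=> anq /(@split3 0 q) [u [x [t [-> /size0nil -> sx]]]].
have [x1 [x2 [x3 [ex s1 s2]]]] := @split3 (q - a - n) n x ltac:(lia); subst x.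
have s3 : size x3 = a by move: sx; rewrite !size_cat; lia.
have seg0 v t' : size v = q -> srev_seg 0 q (v ++ t') = srev v ++ t'.
  by move=> sv; exact: (@srev_seg_cat 0 q [::] v t' erefl sv).
rewrite /= seg0 // srev_seg_catr ?size_srev ?sx //.
rewrite {1}/srev -xi_words_srev_seg ?size_xi_rev ?sx //.
rewrite !xi_rev_cat -catA srev_seg_cat ?size_xi_rev //.
rewrite seg0; last by rewrite size_xi_words !size_cat size_srev !size_xi_rev -sx !size_cat; lia.
rewrite srev_xi_words !xi_rev_cat !xi_revK xi_rev_srev.
have -> : (x1 ++ x2 ++ x3) ++ t = x1 ++ x2 ++ x3 ++ t by rewrite -!catA.
by rewrite srev_seg_cat // -!catA.
Qed.

Lemma sigma_cat p r q u a b t : p.-1 <= r <= q ->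
  size u = p.-1 -> size a = r - p.-1 -> size b = q - r ->
  sigma theta B p r q (u ++ a ++ b ++ t) = u ++ commutor theta a b ++ t.
Proof.
move=> /andP [pr rq] su sa sb; rewrite /sigma -sa -sb.
have -> : q = size (u ++ a ++ b) by rewrite !size_cat su sa sb; lia.
have -> : r = size (u ++ a) by rewrite !size_cat su sa; lia.
rewrite -su take_size_cat // drop_size_cat // take_size_cat //.
rewrite [X in drop _ X]catA drop_size_cat // take_size_cat //.
by rewrite [X in drop _ X]catA [X in drop _ X]catA drop_size_cat // !size_cat addnA.
Qed.

Lemma sigma_srev_seg p r q w : 0 < p <= r -> r <= q <= size w ->
  sigma theta B p r q w =
  srev_seg p.-1 (q - p.-1) (srev_seg p.-1 (r - p.-1) (srev_seg r (q - r) w)).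
Proof.
move=> /andP [p0 pr] /andP [rq qw].
have [u [m [t [-> su sm]]]] := @split3 p.-1 (q - p.-1) w ltac:(lia).
have [a [b [t' [em sa sb]]]] := @split3 (r - p.-1) (q - r) m ltac:(lia).
have t'0 : t' = [::] by apply/size0nil; move: sm; rewrite em !size_cat; lia.
subst m t'; rewrite cats0.
have -> : u ++ (a ++ b) ++ t = u ++ a ++ b ++ t by rewrite !catA.
have prq : p.-1 <= r <= q by apply/andP; split; lia.
rewrite sigma_cat // commutor_srev.
rewrite (catA u a) srev_seg_cat ?size_cat ?su ?sa //; last by lia.
rewrite -(catA u a) srev_seg_cat // (catA (srev a)) srev_seg_cat //.
by rewrite size_cat !size_srev sa sb; lia.
Qed.

Lemma s_aux_srev_seg d p w : 0 < p -> p + d <= size w ->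
  s_aux theta d p w = srev_seg p.-1 d.+1 w.
Proof.
elim: d p => [|d IH] p p0 pdw /=; first by rewrite srev_seg1 //; lia.
rewrite IH ?addSnnS // sigma_srev_seg ?leqnn ?size_srev_seg ?p0 //; try lia.
have -> : p - p.-1 = 1 by lia.
have -> : p + d.+1 - p = d.+1 by lia.
have -> : p + d.+1 - p.-1 = d.+2 by lia.
rewrite srev_segK; last by lia.
by rewrite srev_seg1 //; lia.
Qed.

Lemma s1_srev_seg q w : 0 < q <= size w -> s theta B 1 q w = srev_seg 0 q w.
Proof. by move=> /andP [q0 qw]; rewrite /s s_aux_srev_seg ?subn1 ?prednK //; lia. Qed.

Lemma sigma_sigma_srev_seg i w : 2 <= i < size w ->
  sigma theta B 1 1 i (sigma theta B 1 i i.+1 w) =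
  srev_seg 0 i (srev_seg 0 i.+1 (srev_seg 0 i (srev_seg 0 i.-1 w))).
Proof.
move=> /andP [i2 iw].
rewrite (@sigma_srev_seg 1 i i.+1) ?subn0 ?subSnn ?srev_seg1 //; try lia.
rewrite sigma_srev_seg ?size_srev_seg //= ?subn0 ?srev_seg1 ?size_srev_seg //; try lia.
congr (srev_seg 0 i _).
have conj_i : srev_seg 1 (i - 1) (srev_seg 0 i w) = srev_seg 0 i (srev_seg 0 i.-1 w).
  have sw : size (srev_seg 0 i w) = size w by apply: size_srev_seg; lia.
  have := @srev_seg_conj 0 i.-1 i (srev_seg 0 i w) ltac:(lia) ltac:(lia).
  rewrite srev_segK; last by lia.
  by rewrite (_ : i - 0 - i.-1 = 1) ?subn1 => [->|]; last lia.
have conj_i1 z : size z = size w ->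
    srev_seg 1 (i - 1) (srev_seg 0 i.+1 z) = srev_seg 0 i.+1 (srev_seg 1 (i - 1) z).
  move=> sz; have := @srev_seg_conj 1 (i - 1) i.+1 z ltac:(lia) ltac:(lia).
  rewrite (_ : i.+1 - 1 - (i - 1) = 1); last by lia.
  have s1 : size (srev_seg 0 i.+1 z) = size z by apply: size_srev_seg; lia.
  have s2 : size (srev_seg 1 (i - 1) (srev_seg 0 i.+1 z)) = size z by rewrite size_srev_seg; lia.
  by move=> <-; rewrite srev_segK //; lia.
by rewrite conj_i1 ?size_srev_seg ?conj_i //; lia.
Qed.

Lemma T_srev_seg i w : 2 <= i < size w ->
  T theta B i w = srev_seg 0 i (srev_seg 0 i.+1 (srev_seg 0 i (srev_seg 0 i.-1 w))).
Proof.
move=> /andP [i2 iw].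
rewrite /T; case: eqP => [|_]; first lia.
case: eqP => [-> | _] /=.
  rewrite (@srev_seg1 0); last by lia.
  by rewrite !s1_srev_seg ?size_srev_seg //; lia.
by rewrite !s1_srev_seg ?size_srev_seg //; lia.
Qed.

End Reversal.

Theorem proposition6p2 (I : Type) (theta : I -> I) (L : Type)
  (Bl : L -> crystal I) (B : crystal I) (N : nat) :
  (forall i, theta (theta i) = i) ->
  kashiwara_family theta Bl ->
  normal_in Bl B ->
  2 <= N ->
  (forall i, 2 <= i <= N.-1 -> forall w : seq B, size w = N ->
     T theta B i w = sigma theta B 1 1 i (sigma theta B 1 i i.+1 w)) /\
  (forall w : seq B, size w = N -> T theta B 1 w = sigma theta B 1 1 2 w).
Proof.
move=> thetaK [Bl_seminormal [_ [Bl_highest [Bl_schutz Bl_tensor]]]] B_normal _.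
split=> [i iN w sw|//].
have iw : 2 <= i < size w by rewrite sw; lia.
by rewrite (T_srev_seg thetaK Bl_seminormal Bl_highest Bl_schutz Bl_tensor B_normal iw)
           (sigma_sigma_srev_seg thetaK Bl_seminormal Bl_highest Bl_schutz Bl_tensor B_normal iw).
Qed.
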